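(* Let $k,\ell\ge 1$ and let $G$ and $H$ be graphs with $\delta(G)\ge k$ and $\delta(H)\ge \ell$. Then \[ \Gamma_{\times k\ell,t}(G\times H)\ge\Gamma_{\times k,t}(G)\cdot\Gamma_{\times \ell,t}(H). \]
   Context: For an integer $k\ge1$ and a graph $G$ with $\delta(G)\ge k$, a set $S\subseteq V(G)$ is a $k$-tuple total dominating set ($k$TDS) if $|N_G(x)\cap S|\ge k$ for every $x\in V(G)$, and $\Gamma_{\times k,t}(G)$ is the maximum cardinality of a minimal (with respect to inclusion) $k$TDS of $G$. The cross (direct) product $G\times H$ has vertex set $V(G)\times V(H)$, with $(g_1,h_1)\sim(g_2,h_2)$ iff $g_1g_2\in E(G)$ and $h_1h_2\in E(H)$. *)

From mathcomp Require Import all_boot.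
Set Implicit Arguments. Unset Strict Implicit. Unset Printing Implicit Defensive.

Definition simple_graph (T : finType) (e : rel T) : Prop :=
  symmetric e /\ irreflexive e.

Definition nbhd (T : finType) (e : rel T) (x : T) : {set T} := [set y | e x y].

Definition min_deg_ge (T : finType) (e : rel T) (k : nat) : Prop :=
  forall x : T, k <= #|nbhd e x|.

Definition is_kTDS (T : finType) (e : rel T) (k : nat) (S : {set T}) : bool :=
  [forall x, k <= #|nbhd e x :&: S|].

Definition is_minimal_kTDS (T : finType) (e : rel T) (k : nat) (S : {set T}) : bool :=
  is_kTDS e k S && [forall S' : {set T}, (S' \proper S) ==> ~~ is_kTDS e k S'].

Definition Gamma_kt (T : finType) (e : rel T) (k : nat) : nat :=
  \max_(S : {set T} | is_minimal_kTDS e k S) #|S|.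

Definition cross_rel (T1 T2 : finType) (e1 : rel T1) (e2 : rel T2) : rel (T1 * T2)%type :=
  fun u v => e1 u.1 v.1 && e2 u.2 v.2.

From mathcomp Require Import all_boot.

Set Implicit Arguments.
Unset Strict Implicit.
Unset Printing Implicit Defensive.

(** If [S1] and [S2] are minimal k- and l-tuple total dominating sets, then
    [S1 × S2] is a minimal [kl]-tuple total dominating set of the cross product,
    since the neighbourhood of [(g, h)] meets [S1 × S2] in
    [(N(g) ∩ S1) × (N(h) ∩ S2)]. Minimality of [S1] means that every [a ∈ S1]
    lies in some [N(g)] with [|N(g) ∩ S1| = k] exactly, and likewise for [S2];
    removing [(a, b)] then leaves only [kl - 1] elements in the neighbourhood of
    [(g, h)]. The bound follows by taking maximal such [S1] and [S2]. *)

Lemma Gamma_kt_ge (T : finType) (e : rel T) (k : nat) (S : {set T}) :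
  is_minimal_kTDS e k S -> #|S| <= Gamma_kt e k.
Proof. exact: (@leq_bigmax_cond _ (is_minimal_kTDS e k) (fun S => #|S|)). Qed.

Lemma Gamma_kt_eq0_or_attained (T : finType) (e : rel T) (k : nat) :
  Gamma_kt e k = 0 \/ exists2 S, is_minimal_kTDS e k S & Gamma_kt e k = #|S|.
Proof.
rewrite /Gamma_kt; case: (pickP (is_minimal_kTDS e k)) => [S minS | none]; last first.
  by left; rewrite big_pred0.
right; have [|S0 minS0 ->] := @eq_bigmax_cond _ (is_minimal_kTDS e k) (fun S => #|S|).
  by apply/card_gt0P; exists S.
by exists S0.
Qed.

Lemma minimal_kTDS_critical (T : finType) (e : rel T) (k : nat) (S : {set T}) a :
  is_minimal_kTDS e k S -> a \in S ->
  exists2 g, a \in nbhd e g :&: S & #|nbhd e g :&: S| = k.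
Proof.
move=> /andP[/forallP tdsS /forallP minS] aS.
have := minS (S :\ a); rewrite properD1 //= => /forallPn[g]; rewrite -ltnNge => lt_gk.
have {lt_gk}: #|(nbhd e g :&: S) :\ a| < k by rewrite -setIDA.
have := cardsD1 a (nbhd e g :&: S); have := tdsS g.
case aN: (a \in nbhd e g :&: S) => le_kN card_N lt_Nk.
  by exists g => //; apply/eqP; rewrite eqn_leq le_kN andbT card_N.
by move: (leq_trans lt_Nk le_kN); rewrite card_N ltnn.
Qed.

Lemma nbhd_cross_setX (T1 T2 : finType) (e1 : rel T1) (e2 : rel T2)
    (S1 : {set T1}) (S2 : {set T2}) g h :
  nbhd (cross_rel e1 e2) (g, h) :&: setX S1 S2 =
  setX (nbhd e1 g :&: S1) (nbhd e2 h :&: S2).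
Proof. by apply/setP => -[x y]; rewrite !inE /cross_rel /= -!andbA; do 2!bool_congr. Qed.

Section CrossProduct.

Variables (T1 T2 : finType) (e1 : rel T1) (e2 : rel T2) (k l : nat).
Variables (S1 : {set T1}) (S2 : {set T2}).

Lemma is_kTDS_setX :
  is_kTDS e1 k S1 -> is_kTDS e2 l S2 -> is_kTDS (cross_rel e1 e2) (k * l) (setX S1 S2).
Proof.
move=> /forallP tds1 /forallP tds2; apply/forallP => -[g h].
by rewrite nbhd_cross_setX cardsX leq_mul.
Qed.

Lemma is_minimal_kTDS_setX :
  is_minimal_kTDS e1 k S1 -> is_minimal_kTDS e2 l S2 ->
  is_minimal_kTDS (cross_rel e1 e2) (k * l) (setX S1 S2).
Proof.
move=> min1 min2; rewrite /is_minimal_kTDS is_kTDS_setX ?(andP min1).1 ?(andP min2).1 //=.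
apply/forallP => S'; apply/implyP => /properP[sub_S' [[a b] abX abS']].
move: abX; rewrite inE => /andP[/= aS1 bS2].
have [g ag card_g] := minimal_kTDS_critical min1 aS1.
have [h bh card_h] := minimal_kTDS_critical min2 bS2.
set X := setX (nbhd e1 g :&: S1) (nbhd e2 h :&: S2).
have abX : (a, b) \in X by rewrite inE ag bh.
have sub_N : nbhd (cross_rel e1 e2) (g, h) :&: S' \subset X :\ (a, b).
  apply/subsetP => z /setIP[zN zS'].
  rewrite in_setD1 /X -nbhd_cross_setX inE zN (subsetP sub_S' _ zS') !andbT.
  by apply: contraNneq _ abS' => <-.
apply/forallPn; exists (g, h); rewrite -ltnNge.
apply: leq_ltn_trans (subset_leq_card sub_N) _.
by rewrite -card_g -card_h -cardsX (cardsD1 (a, b) X) abX.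
Qed.

End CrossProduct.

Theorem mainTheorem13 (T1 T2 : finType) (e1 : rel T1) (e2 : rel T2) (k l : nat) :
  simple_graph e1 -> simple_graph e2 ->
  1 <= k -> 1 <= l ->
  min_deg_ge e1 k -> min_deg_ge e2 l ->
  Gamma_kt (cross_rel e1 e2) (k * l) >= Gamma_kt e1 k * Gamma_kt e2 l.
Proof.
move=> _ _ _ _ _ _.
have [-> | [S1 min1 ->]] := Gamma_kt_eq0_or_attained e1 k; first by rewrite mul0n.
have [-> | [S2 min2 ->]] := Gamma_kt_eq0_or_attained e2 l; first by rewrite muln0.
by rewrite -cardsX Gamma_kt_ge // is_minimal_kTDS_setX.
Qed.
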